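(* Under the hypotheses and notation of the context, for every $p\in(0,1)$ the family $\alpha(p;b,s,s')=\tilde\alpha(p;b,s,s')$ ($b\in\Lambda$, $s,s'\in S$) is the unique family of nonnegative real numbers $(a(b,s,s'))_{b\in\Lambda,\,s,s'\in S}$ satisfying $\sum_{s'\in S}a(b,s,s')=1$ for all $b,s$, and, for all $b,s,s'$, $$a(b,s,s')=\sum_{x\in\{0,1\}}\pi_x\,Q_x(b,s,s'),$$ where $\pi_1=p$, $\pi_0=1-p$, and, writing $\rho(s,x,b)=c_1\cdots c_r$ and $t=\sigma(s,x,b)$: if $r=0$ then $Q_x(b,s,s')=\mathbf 1\{t=s'\}$, and if $r>0$ then $Q_x(b,s,s')=\sum\prod_{i=1}^r a(c_i,t_i,t_{i+1})$, the sum running over all $(t_1,\dots,t_{r+1})\in S^{r+1}$ with $t_1=t$ and $t_{r+1}=s'$.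
   Context: A (deterministic) pushdown automaton over input alphabet $\{0,1\}$ consists of a finite state set $S$, a finite stack alphabet $\Lambda$, and a transition map assigning to each $(s,x,b)\in S\times\{0,1\}\times\Lambda$ a new state $\sigma(s,x,b)\in S$ and a word $\rho(s,x,b)\in\Lambda^*$. At each step it reads one input bit $x$ (input bits are i.i.d., equal to $1$ with probability $p$); in state $s$ with stack $bu$ ($b$ the top, i.e. leftmost, symbol) it moves to state $\sigma(s,x,b)$ with stack $\rho(s,x,b)u$; when the stack is empty it stops. Standing assumption: for every $b\in\Lambda$, $s\in S$, $w\in\Lambda^*$ and $p\in(0,1)$, started in state $s$ with stack $bw$, almost surely the stack content eventually equals $w$. For $u\in\Lambda^*$, $\tilde\alpha(p;u,s,s')$ denotes the probability that, started in state $s$ with stack $uw$, at the first time the stack content equals $w$ the automaton is in state $s'$ (independent of $w$). *)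

From HB Require Import structures.
From mathcomp Require Import all_boot all_order all_algebra.
From mathcomp Require Import all_classical all_reals all_analysis.
Set Implicit Arguments. Unset Strict Implicit. Unset Printing Implicit Defensive.
Import Order.TTheory GRing.Theory Num.Theory.
Import numFieldNormedType.Exports.
Local Open Scope ring_scope.

Section PDA.
Variables (R : realType) (S L : finType).
(* transition map: input bit x : bool (true = 1) *)
Variables (sigma : S -> bool -> L -> S) (rho : S -> bool -> L -> seq L).

Definition pda_step (c : S * seq L) (x : bool) : S * seq L :=
  match c.2 with
  | [::] => c
  | b :: u => (sigma c.1 x b, rho c.1 x b ++ u)
  end.

Definition pda_run (c : S * seq L) (xs : seq bool) : S * seq L :=
  foldl pda_step c xs.

Definition bits_weight (p : R) (xs : seq bool) : R :=
  \prod_(x <- xs) (if x then p else 1 - p).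

Definition first_hit_at (s : S) (v w : seq L) (s' : S) (xs : seq bool) : bool :=
  [&& (pda_run (s, v) xs == (s', w))
    & all (fun k => (pda_run (s, v) (take k xs)).2 != w) (iota 0 (size xs))].

Definition first_hit_prob (p : R) (s : S) (v w : seq L) (s' : S) (n : nat) : R :=
  \sum_(xs : n.-tuple bool | first_hit_at s v w s' xs) bits_weight p xs.

(* probability that, started in s with stack v, the stack content eventually
   equals w and at the first such time the state is s'
   (countable disjoint union over the hitting time n) *)
Definition hit_prob (p : R) (s : S) (v w : seq L) (s' : S) : R :=
  limn (series (first_hit_prob p s v w s')).

(* alpha~(p; u, s, s') : started in s with stack u w, in state s' at the first
   time the stack equals w; we take w = [::] (independent of w) *)
Definition alpha_tilde (p : R) (u : seq L) (s s' : S) : R :=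
  hit_prob p s u [::] s'.

Definition Qx (a : L -> S -> S -> R) (x : bool) (b : L) (s s' : S) : R :=
  let cs := rho s x b in
  let t := sigma s x b in
  if size cs == 0%N then (t == s')%:R
  else \sum_(ts : {ffun 'I_(size cs).+1 -> S} |
              (ts ord0 == t) && (ts ord_max == s'))
         \prod_(i < size cs)
            a (tnth (in_tuple cs) i) (ts (widen_ord (leqnSn _) i)) (ts (lift ord0 i)).

Definition alpha_system (p : R) (a : L -> S -> S -> R) : Prop :=
  (forall b s s', 0 <= a b s s')
  /\ (forall b s, \sum_(s' : S) a b s s' = 1)
  /\ (forall b s s', a b s s' = p * Qx a true b s s' + (1 - p) * Qx a false b s s').

End PDA.

From HB Require Import structures.
From mathcomp Require Import all_boot all_order all_algebra.
From mathcomp Require Import all_classical all_reals all_analysis.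
Import Order.TTheory GRing.Theory Num.Theory.
Import numFieldNormedType.Exports.
Local Open Scope ring_scope.
Set Implicit Arguments. Unset Strict Implicit. Unset Printing Implicit Defensive.

(* Let P_N(u, s, s') be the probability that the stack started at u empties
   before time N, in state s'.  Splitting on the first bit gives the
   recurrence P_(N+1)(b u) = p P_N(rho_1 u) + (1 - p) P_N(rho_0 u), and an
   emptying of u1 u2 goes through an emptying of u1, so P_N(u1 u2) is bounded
   by the matrix product of P_N(u1) and P_N(u2).  Hence P_(N+1)([b]) is bounded
   by the right-hand side F(P_N) of the system, with F monotone; by induction
   P_N <= a for every solution a, and in the limit alpha <= a and
   alpha <= F(alpha).  In both inequalities the two sides are stochastic
   (alpha by the standing assumption), so they are equalities. *)

Lemma eq_of_ler_sum (R : numDomainType) (I : finType) (x y : I -> R) :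
  (forall i, x i <= y i) -> \sum_i x i = \sum_i y i -> forall i, x i = y i.
Proof.
move=> le_xy eq_sum i; apply/eqP; rewrite eq_sym -subr_eq0; apply/eqP.
have sumB0 : \sum_i (y i - x i) = 0 by rewrite sumrB eq_sum subrr.
by move/psumr_eq0P: sumB0 => -> // j _; rewrite subr_ge0.
Qed.

Lemma sum_delta_mul (R : pzSemiRingType) (I : finType) (i : I) (F : I -> R) :
  \sum_j (i == j)%:R * F j = F i.
Proof.
rewrite (eq_bigr (fun j => if j == i then F j else 0)) => [|j _].
  by rewrite -big_mkcond big_pred1_eq.
by rewrite eq_sym; case: eqP; rewrite ?mul1r ?mul0r.
Qed.

Lemma sum_delta (R : pzSemiRingType) (I : finType) (i : I) :
  \sum_j ((i == j)%:R : R) = 1.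
Proof. by under eq_bigr do rewrite -[_%:R]mulr1; rewrite sum_delta_mul. Qed.

Section FfunCons.
Variables (R : nmodType) (T : finType).

Definition ffun_cons n (x : T) (g : {ffun 'I_n -> T}) : {ffun 'I_n.+1 -> T} :=
  [ffun i => if unlift ord0 i is Some j then g j else x].

Definition ffun_behead n (f : {ffun 'I_n.+1 -> T}) : {ffun 'I_n -> T} :=
  [ffun j => f (lift ord0 j)].

Lemma ffun_cons0 n x (g : {ffun 'I_n -> T}) : ffun_cons x g ord0 = x.
Proof. by rewrite ffunE unlift_none. Qed.

Lemma ffun_consS n x (g : {ffun 'I_n -> T}) j : ffun_cons x g (lift ord0 j) = g j.
Proof. by rewrite ffunE liftK. Qed.

Lemma ffun_cons_max n x (g : {ffun 'I_n.+1 -> T}) : ffun_cons x g ord_max = g ord_max.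
Proof.
have -> : ord_max = lift ord0 (ord_max : 'I_n.+1) by apply: val_inj.
exact: ffun_consS.
Qed.

Lemma big_ffun_cons n x (P : pred {ffun 'I_n.+1 -> T}) (F : {ffun 'I_n.+1 -> T} -> R) :
  \sum_(f : {ffun 'I_n.+1 -> T} | (f ord0 == x) && P f) F f =
  \sum_(g : {ffun 'I_n -> T} | P (ffun_cons x g)) F (ffun_cons x g).
Proof.
rewrite (reindex_onto (@ffun_cons n x) (@ffun_behead n)) => [|f /andP[/eqP f0 _]].
  apply: eq_bigl => g; rewrite ffun_cons0 eqxx /=.
  have -> : ffun_behead (ffun_cons x g) = g.
    by apply/ffunP => j; rewrite ffunE ffun_consS.
  by rewrite eqxx andbT.
apply/ffunP => i; rewrite ffunE.
by case: unliftP => [j ->|->]; rewrite ?ffunE.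
Qed.

End FfunCons.

Section Chains.
Variables (R : numDomainType) (S L : finType).
Implicit Types (a : L -> S -> S -> R) (cs : seq L).

Fixpoint chain_weight a cs (t s' : S) : R :=
  if cs is c :: cs' then \sum_t2 a c t t2 * chain_weight a cs' t2 s'
  else (t == s')%:R.

Definition chain_prod a cs (ts : {ffun 'I_(size cs).+1 -> S}) : R :=
  \prod_(i < size cs)
     a (tnth (in_tuple cs) i) (ts (widen_ord (leqnSn _) i)) (ts (lift ord0 i)).
Arguments chain_prod a cs ts : clear implicits.

Lemma chain_prod_cons a c cs x (g : {ffun 'I_(size cs).+1 -> S}) :
  chain_prod a (c :: cs) (ffun_cons x g) = a c x (g ord0) * chain_prod a cs g.
Proof.
rewrite /chain_prod big_ord_recl ffun_consS; congr (_ * _).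
  by rewrite (_ : widen_ord _ _ = ord0) ?ffun_cons0 //; apply: val_inj.
apply: eq_bigr => i _.
rewrite (_ : widen_ord _ (lift ord0 i) = lift ord0 (widen_ord (leqnSn _) i)).
  by rewrite !ffun_consS (tnth_nth c) [in RHS](tnth_nth c).
exact: val_inj.
Qed.

Lemma sum_chain_prod a cs t s' :
  \sum_(ts : {ffun 'I_(size cs).+1 -> S} | (ts ord0 == t) && (ts ord_max == s'))
     chain_prod a cs ts = chain_weight a cs t s'.
Proof.
elim: cs t => [|c cs IH] t /=; rewrite big_ffun_cons.
  rewrite (_ : ord_max = ord0); last exact: val_inj.
  under eq_bigl do rewrite ffun_cons0.
  case: eqP => _; last by rewrite big_pred0.
  under eq_bigr do rewrite /chain_prod big_ord0.
  by rewrite sumr_const card_ffun card_ord expn0.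
under [LHS]eq_bigl => g do rewrite (@ffun_cons_max _ (size cs) t g).
under eq_bigr do rewrite chain_prod_cons.
rewrite (partition_big (fun g : {ffun 'I_(size cs).+1 -> S} => g ord0) predT) //=.
apply: eq_bigr => t2 _.
rewrite -IH mulr_sumr; apply: eq_big => [g|g /andP[_ /eqP->]] //.
by rewrite andbC.
Qed.

Lemma chain_weight_ge0 a cs t s' :
  (forall c t t', 0 <= a c t t') -> 0 <= chain_weight a cs t s'.
Proof.
move=> a_ge0; elim: cs t => [|c cs IH] t /=; first exact: ler0n.
by apply: sumr_ge0 => t2 _; apply: mulr_ge0.
Qed.

Lemma chain_weight_le a1 a2 cs t s' :
  (forall c t t', 0 <= a1 c t t') -> (forall c t t', a1 c t t' <= a2 c t t') ->
  chain_weight a1 cs t s' <= chain_weight a2 cs t s'.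
Proof.
move=> a1_ge0 le_a12; elim: cs t => [|c cs IH] t //=.
by apply: ler_sum => t2 _; apply: ler_pM => //; apply: chain_weight_ge0.
Qed.

Lemma sum_chain_weight a cs t :
  (forall c t, \sum_t' a c t t' = 1) -> \sum_s' chain_weight a cs t s' = 1.
Proof.
move=> a_sum1; elim: cs t => [|c cs IH] t /=; first exact: sum_delta.
rewrite exchange_big /=; under eq_bigr do rewrite -mulr_sumr IH mulr1.
exact: a_sum1.
Qed.

End Chains.

Section HittingTimes.
Variables (R : realType) (S L : finType).
Variables (sigma : S -> bool -> L -> S) (rho : S -> bool -> L -> seq L).
Variable p : R.
Implicit Types (a : L -> S -> S -> R).

Lemma sum_bits_weight_tuple0 (P : pred (seq bool)) :
  \sum_(xs : 0.-tuple bool | P xs) bits_weight p xs = (P [::])%:R.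
Proof.
rewrite big_mkcond (eq_bigr (fun=> (P [::])%:R)) => [|xs _].
  by rewrite sumr_const card_tuple expn0 mulr1n.
by rewrite tuple0 /bits_weight big_nil; case: (P _).
Qed.

Lemma sum_bits_weight_tupleS n (P : pred (seq bool)) :
  \sum_(xs : n.+1.-tuple bool | P xs) bits_weight p xs =
  p * \sum_(ys : n.-tuple bool | P (true :: ys)) bits_weight p ys +
  (1 - p) * \sum_(ys : n.-tuple bool | P (false :: ys)) bits_weight p ys.
Proof.
rewrite !mulr_sumr.
rewrite (_ : _ + _ = \sum_(x : bool) \sum_(ys : n.-tuple bool | P (x :: ys))
                       (if x then p else 1 - p) * bits_weight p ys); last first.
  by rewrite big_bool.
rewrite pair_big_dep /=.
rewrite (reindex (fun xy : bool * n.-tuple bool => [tuple of xy.1 :: xy.2])) /=.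
  by apply: eq_big => [[x ys]|[x ys] _] //; rewrite /bits_weight big_cons.
exists (fun xs : n.+1.-tuple bool => (thead xs, behead_tuple xs)).
  by move=> [x ys] _; congr pair; apply: val_inj.
by move=> xs _; case/tupleP: xs => x ys; apply: val_inj.
Qed.

Lemma first_hit_at_nil s u s' :
  first_hit_at sigma rho s u [::] s' [::] = (u == [::]) && (s == s').
Proof. by rewrite /first_hit_at /= andbT xpair_eqE andbC. Qed.

Lemma first_hit_at_stopped s s' x xs :
  first_hit_at sigma rho s [::] [::] s' (x :: xs) = false.
Proof. by rewrite /first_hit_at /= andbF. Qed.

Lemma first_hit_at_cons s b u s' x xs :
  first_hit_at sigma rho s (b :: u) [::] s' (x :: xs) =
  first_hit_at sigma rho (sigma s x b) (rho s x b ++ u) [::] s' xs.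
Proof.
by rewrite /first_hit_at /=; congr andb; rewrite -(addn0 1%N) iotaDl all_map.
Qed.

Definition hit_by (N : nat) (u : seq L) (s s' : S) : R :=
  series (first_hit_prob sigma rho p s u [::] s') N.

Lemma hit_by0 u s s' : hit_by 0 u s s' = 0.
Proof. by rewrite /hit_by /series /= big_geq. Qed.

Lemma first_hit_prob0 u s s' :
  first_hit_prob sigma rho p s u [::] s' 0 = ((u == [::]) && (s == s'))%:R.
Proof. by rewrite /first_hit_prob sum_bits_weight_tuple0 first_hit_at_nil. Qed.

Lemma hit_by_nil N s s' : hit_by N.+1 [::] s s' = (s == s')%:R.
Proof.
rewrite /hit_by /series /= big_nat_recl // first_hit_prob0 /= big1 ?addr0 //.
move=> n _; rewrite /first_hit_prob sum_bits_weight_tupleS.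
by rewrite !big_pred0 ?mulr0 ?addr0 // => ys; rewrite first_hit_at_stopped.
Qed.

Lemma hit_by_cons N b u s s' : hit_by N.+1 (b :: u) s s' =
  p * hit_by N (rho s true b ++ u) (sigma s true b) s' +
  (1 - p) * hit_by N (rho s false b ++ u) (sigma s false b) s'.
Proof.
rewrite /hit_by /series /= big_nat_recl // first_hit_prob0 /= add0r.
rewrite !mulr_sumr -big_split /=; apply: eq_bigr => n _.
rewrite /first_hit_prob sum_bits_weight_tupleS.
by congr (_ * _ + _ * _); apply: eq_bigl => ys; rewrite first_hit_at_cons.
Qed.

Hypothesis p01 : 0 <= p <= 1.

Let p_ge0 : 0 <= p. Proof. by case/andP: p01. Qed.
Let q_ge0 : 0 <= 1 - p. Proof. by case/andP: p01 => _; rewrite subr_ge0. Qed.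

Lemma hit_by_ge0 N u s s' : 0 <= hit_by N u s s'.
Proof.
apply: sumr_ge0 => n _; apply: sumr_ge0 => xs _.
by apply: prodr_ge0 => -[].
Qed.

Lemma hit_by_nondecreasing u s s' : nondecreasing_seq (fun N => hit_by N u s s').
Proof.
apply/nondecreasing_seqP => N.
by rewrite /hit_by /series /= big_nat_recr //= lerDl; apply: sumr_ge0 => xs _;
  apply: prodr_ge0 => -[].
Qed.

Lemma sum_hit_by_le1 N u s : \sum_s' hit_by N u s s' <= 1.
Proof.
elim: N u s => [|N IH] [|b u] s.
- by rewrite big1 ?ler01 // => s' _; rewrite hit_by0.
- by rewrite big1 ?ler01 // => s' _; rewrite hit_by0.
- by under eq_bigr do rewrite hit_by_nil; rewrite sum_delta.
under eq_bigr do rewrite hit_by_cons.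
rewrite big_split /= -!mulr_sumr -[X in _ <= X](subrKC p) -[X in _ <= X + _]mulr1.
by rewrite -[X in _ <= _ + X]mulr1; apply: lerD; apply: ler_wpM2l.
Qed.

Lemma hit_by_le1 N u s s' : hit_by N u s s' <= 1.
Proof.
apply: le_trans (sum_hit_by_le1 N u s).
by rewrite (bigD1 s') //= lerDl; apply: sumr_ge0 => t _; apply: hit_by_ge0.
Qed.

(* Emptying [u1 ++ u2] within N steps means emptying [u1], in some state t,
   and then [u2] from t, each within N steps. *)
Lemma hit_by_cat N u1 u2 s s'' :
  hit_by N (u1 ++ u2) s s'' <= \sum_s' hit_by N u1 s s' * hit_by N u2 s' s''.
Proof.
elim: N u1 s => [|N IH] [|b u1] s.
- by rewrite hit_by0; apply: sumr_ge0 => t _; apply: mulr_ge0; apply: hit_by_ge0.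
- by rewrite hit_by0; apply: sumr_ge0 => t _; apply: mulr_ge0; apply: hit_by_ge0.
- by under eq_bigr do rewrite hit_by_nil; rewrite sum_delta_mul.
rewrite cat_cons hit_by_cons.
under eq_bigr do rewrite hit_by_cons mulrDl -!mulrA.
rewrite big_split /= -!mulr_sumr.
by apply: lerD; apply: ler_wpM2l => //; rewrite catA; apply: le_trans (IH _ _) _;
  apply: ler_sum => t _; apply: ler_wpM2l; rewrite ?hit_by_ge0 //;
  apply: hit_by_nondecreasing.
Qed.

Lemma hit_by_le_chain_weight N cs t s' :
  hit_by N cs t s' <= chain_weight (fun c => hit_by N [:: c]) cs t s'.
Proof.
elim: cs t => [|c cs IH] t /=.
  by case: N => [|N]; rewrite ?hit_by0 ?hit_by_nil.
apply: le_trans (hit_by_cat N [:: c] cs t s') _.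
by apply: ler_sum => t2 _; apply: ler_wpM2l; [exact: hit_by_ge0|exact: IH].
Qed.

Lemma Qx_chain_weight a x b s s' :
  Qx sigma rho a x b s s' = chain_weight a (rho s x b) (sigma s x b) s'.
Proof.
rewrite /Qx /=; case: ifP => [/eqP|_]; last exact: sum_chain_prod.
by case: (rho s x b).
Qed.

Definition system_map (a : L -> S -> S -> R) (b : L) (s s' : S) : R :=
  p * Qx sigma rho a true b s s' + (1 - p) * Qx sigma rho a false b s s'.

Lemma sum_system_map a b s :
  (forall c t, \sum_t' a c t t' = 1) -> \sum_s' system_map a b s s' = 1.
Proof.
move=> a_sum1; rewrite big_split /= -!mulr_sumr.
under eq_bigr do rewrite Qx_chain_weight.
under [X in _ + _ * X]eq_bigr do rewrite Qx_chain_weight.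
by rewrite !sum_chain_weight // !mulr1 subrKC.
Qed.

Lemma system_map_ge0 a b s s' :
  (forall c t t', 0 <= a c t t') -> 0 <= system_map a b s s'.
Proof.
move=> a_ge0; rewrite /system_map !Qx_chain_weight.
by apply: addr_ge0; apply: mulr_ge0 => //; apply: chain_weight_ge0.
Qed.

Lemma hit_by_succ_le_system_map N a b s s' :
  (forall c t t', 0 <= a c t t') -> (forall c t t', hit_by N [:: c] t t' <= a c t t') ->
  hit_by N.+1 [:: b] s s' <= system_map a b s s'.
Proof.
move=> a_ge0 hit_le_a; rewrite hit_by_cons !cats0 /system_map !Qx_chain_weight.
have hit_le_chain x : hit_by N (rho s x b) (sigma s x b) s' <=
                      chain_weight a (rho s x b) (sigma s x b) s'.
  apply: le_trans (hit_by_le_chain_weight _ _ _ _) _.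
  by apply: chain_weight_le => // *; apply: hit_by_ge0.
by apply: lerD; apply: ler_wpM2l.
Qed.

End HittingTimes.

Section FirstHitProbabilities.
Variables (R : realType) (S L : finType).
Variables (sigma : S -> bool -> L -> S) (rho : S -> bool -> L -> seq L).
Variable p : R.
Hypothesis p01 : 0 <= p <= 1.

Local Notation hit_by := (hit_by sigma rho p).
Local Notation alpha u := (alpha_tilde sigma rho p u).

Lemma is_cvg_hit_by u s s' : cvgn (fun N => hit_by N u s s').
Proof.
apply: nondecreasing_is_cvgn; first exact: hit_by_nondecreasing.
by exists 1 => _ [N _ <-]; apply: hit_by_le1.
Qed.

Lemma hit_by_le_alpha_tilde N u s s' : hit_by N u s s' <= alpha u s s'.
Proof.
apply: (nondecreasing_cvgn_le (hit_by_nondecreasing sigma rho p01 _ _ _)).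
exact: is_cvg_hit_by.
Qed.

Lemma alpha_tilde_ge0 u s s' : 0 <= alpha u s s'.
Proof. by apply: le_trans (hit_by_le_alpha_tilde 0 u s s'); rewrite hit_by0. Qed.

Lemma alpha_tilde_le u s s' c : (forall N, hit_by N u s s' <= c) -> alpha u s s' <= c.
Proof. by move=> hit_le_c; apply: limr_le; [exact: is_cvg_hit_by|exact: nearW]. Qed.

Lemma sum_alpha_tilde u s :
  \sum_s' alpha u s s' =
  limn (series (fun n => \sum_s' first_hit_prob sigma rho p s u [::] s' n)).
Proof.
apply/esym/cvg_lim; first exact: Rhausdorff.
have -> : series (fun n => \sum_s' first_hit_prob sigma rho p s u [::] s' n) =
          (fun N => \sum_s' hit_by N u s s').
  by apply/funext => N; rewrite /series /= exchange_big.
by apply: cvg_big; [exact: add_continuous|move=> s' _; exact: is_cvg_hit_by].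
Qed.

Lemma alpha_tilde_le_solution a b s s' :
  alpha_system sigma rho p a -> alpha [:: b] s s' <= a b s s'.
Proof.
move=> [a_ge0 [_ a_fix]]; apply: alpha_tilde_le => N.
elim: N b s s' => [|N IH] b s s'; first by rewrite hit_by0.
by rewrite a_fix; apply: hit_by_succ_le_system_map.
Qed.

Lemma alpha_tilde_le_system_map b s s' :
  alpha [:: b] s s' <= system_map sigma rho p (fun c => alpha [:: c]) b s s'.
Proof.
apply: alpha_tilde_le => -[|N].
  by rewrite hit_by0; apply: system_map_ge0 => // *; apply: alpha_tilde_ge0.
apply: hit_by_succ_le_system_map => // *; [exact: alpha_tilde_ge0|exact: hit_by_le_alpha_tilde].
Qed.

End FirstHitProbabilities.

Theorem claim3p2 (R : realType) (S L : finType)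
  (sigma : S -> bool -> L -> S) (rho : S -> bool -> L -> seq L)
  (standing : forall (b : L) (s : S) (w : seq L) (q : R), 0 < q < 1 ->
     limn (series (fun n => \sum_(s' : S) first_hit_prob sigma rho q s (b :: w) w s' n)) = 1)
  (p : R) (hp : 0 < p < 1) :
  alpha_system sigma rho p (fun b s s' => alpha_tilde sigma rho p [:: b] s s')
  /\ forall a : L -> S -> S -> R, alpha_system sigma rho p a ->
       forall b s s', a b s s' = alpha_tilde sigma rho p [:: b] s s'.
Proof.
have p01 : 0 <= p <= 1 by case/andP: hp => p_gt0 p_lt1; rewrite !ltW.
have sum_alpha b s : \sum_s' alpha_tilde sigma rho p [:: b] s s' = 1.
  by rewrite sum_alpha_tilde //; apply: standing.
split.
  split; first by move=> b s s'; apply: alpha_tilde_ge0.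
  split=> // b s; apply: eq_of_ler_sum => [s'|].
    exact: alpha_tilde_le_system_map.
  by rewrite sum_alpha sum_system_map.
move=> a sol_a b s s'; apply/esym; move: s'.
apply: eq_of_ler_sum => [s'|]; first exact: alpha_tilde_le_solution.
by case: sol_a => _ [-> _]; rewrite sum_alpha.
Qed.
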